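(* Fix a phylogenetic model of $k$-state character change on leaf-labelled trees (for instance any of the CFN, JC, K2P or K3P models). Let $T_1,T_2,T_3,T_4$ be $n$-taxon trees on the taxon set $[n]$, not necessarily distinct, and let $K\subseteq[n]$. If $V_{T_1|_K}\ast V_{T_2|_K}\not\subseteq V_{T_3|_K}\ast V_{T_4|_K}$, then $V_{T_1}\ast V_{T_2}\not\subseteq V_{T_3}\ast V_{T_4}$.
   Context: Taxa are labelled by $[n]=\{1,\dots,n\}$. For each leaf-labelled tree $T$ the model has a polynomial parameterization map $\psi_T$ sending continuous (stochastic) parameters to the joint distribution of states at the leaves, a vector in $\mathbb{C}^{k^n}$; extending $\psi_T$ to complex parameters, $V_T\subseteq\mathbb{P}^{k^n-1}$ denotes the Zariski closure of its image. For $K\subseteq[n]$, $T|_K$ is the induced subtree of $T$ with leaf set $K$; marginalization of a distribution onto the leaves in $K$ is a linear map $\mathbb{C}^{k^n}\to\mathbb{C}^{k^{|K|}}$ which, for the models considered, sends $V_T$ to $V_{T|_K}$. For varieties $V,W$ in projective space, the join $V\ast W$ is the Zariski closure of the union of all lines meeting both $V$ and $W$ (equivalently the closure of the set of all mixtures $\pi p+(1-\pi)p'$ with $p\in V$, $p'\in W$); when $V=W$ it is the secant variety. *)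

From HB Require Import structures.
From mathcomp Require Import all_boot all_order all_algebra.
From mathcomp Require Import mpoly.
Set Implicit Arguments. Unset Strict Implicit. Unset Printing Implicit Defensive.
Import GRing.Theory.
Local Open Scope ring_scope.

Definition aset (F : fieldType) (I : finType) := (I -> F) -> Prop.

Definition aset_sub (F : fieldType) (I : finType) (A B : aset F I) : Prop :=
  forall x, A x -> B x.

Definition zcl (F : fieldType) (I : finType) (S : aset F I) : aset F I :=
  fun x => forall p : {mpoly F[#|I|]},
    (forall y, S y -> p.@[fun j => y (enum_val j)] = 0) ->
    p.@[fun j => x (enum_val j)] = 0.

(* Join of (affine cones over) projective varieties: Zariski closure of the
   set of sums x + y, x in V, y in W (the affine cone over V * W). *)
Definition join (F : fieldType) (I : finType) (V W : aset F I) : aset F I :=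
  zcl (fun z => exists x y, [/\ V x, W y & z = fun i => x i + y i]).

(* Leaves in K ⊆ [n] and joint leaf states (coordinates for leaf set K). *)
Definition leaves n (K : {set 'I_n}) := {i : 'I_n | i \in K}.
Definition coord k n (K : {set 'I_n}) := {ffun leaves K -> 'I_k}.

Definition marg (F : fieldType) k n (K : {set 'I_n})
  (p : coord k [set: 'I_n] -> F) : coord k K -> F :=
  fun s => \sum_(t : coord k [set: 'I_n] |
                 [forall i : leaves K, t (exist _ (sval i) (in_setT (sval i))) == s i])
             p t.
Arguments marg {F k n} K p s.

(* A phylogenetic model of k-state character change on leaf-labelled trees
   with leaves labelled by subsets of [n] (abstracted: the model supplies the
   trees, their induced subtrees, and polynomial parameterizations). *)
Record phylo_model (F : fieldType) (k n : nat) := PhyloModel {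
  tree : {set 'I_n} -> Type;
  restrict : tree [set: 'I_n] -> forall K : {set 'I_n}, tree K;
  npar : forall K, tree K -> nat;
  psi : forall K (T : tree K), coord k K -> {mpoly F[npar T]};
}.

Definition param F k n (M : phylo_model F k n) K (T : tree M K)
  (th : 'I_(npar T) -> F) : coord k K -> F :=
  fun s => (psi T s).@[th].
Arguments param {F k n M K} T th s.

(* V_T : the affine cone over the Zariski closure of the image of psi_T. *)
Definition var F k n (M : phylo_model F k n) K (T : tree M K) : aset F (coord k K) :=
  zcl (fun x => exists (l : F) th, x = fun s => l * param T th s).
Arguments var {F k n M K} T _.

Definition marg_compatible F k n (M : phylo_model F k n) : Prop :=
  forall (T : tree M [set: 'I_n]) (K : {set 'I_n}),
    aset_sub (fun y => exists x, var T x /\ y = marg K x) (var (restrict T K)) /\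
    aset_sub (var (restrict T K)) (zcl (fun y => exists x, var T x /\ y = marg K x)).

(* Marginalization onto K is linear, hence a polynomial map, and polynomial
   maps are Zariski continuous.  Being additive, it sends V_1 * V_2 into the
   join of the marginalized varieties, and that join into the closure of the
   image of V_1 * V_2; closure commutes with joins because translations are
   polynomial.  As the marginalization of V_T is dense in V_{T|K}, a
   containment V_1 * V_2 <= V_3 * V_4 thus descends to the restrictions. *)

From Pilot Require Import Defs.
From HB Require Import structures.
From mathcomp Require Import all_boot all_order all_algebra.
From mathcomp Require Import mpoly.
From Stdlib Require Import FunctionalExtensionality.
Set Implicit Arguments. Unset Strict Implicit. Unset Printing Implicit Defensive.
Import GRing.Theory.
Local Open Scope ring_scope.

Section ZariskiClosure.
Variables (F : fieldType) (I J : finType).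

Definition aset_image (f : (I -> F) -> (J -> F)) (A : aset F I) : aset F J :=
  fun y => exists x, A x /\ y = f x.

Definition aset_sum (A B : aset F I) : aset F I :=
  fun z => exists x y, [/\ A x, B y & z = fun i => x i + y i].

Definition polynomial_map (f : (I -> F) -> (J -> F)) : Prop :=
  exists q : J -> {mpoly F[#|I|]},
    forall x j, (q j).@[fun i => x (enum_val i)] = f x j.

Lemma aset_image_mono (f : (I -> F) -> (J -> F)) (A A' : aset F I) :
  aset_sub A A' -> aset_sub (aset_image f A) (aset_image f A').
Proof. by move=> AA' _ [x [/AA' A'x ->]]; exists x. Qed.

Lemma zcl_ext (S : aset F I) : aset_sub S (zcl S).
Proof. by move=> x Sx p Hp; apply: Hp. Qed.

Lemma zcl_min (S S' : aset F I) :
  aset_sub S (zcl S') -> aset_sub (zcl S) (zcl S').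
Proof. by move=> SS' x Sx p Hp; apply: Sx => y Sy; apply: SS'. Qed.

Lemma zcl_mono (S S' : aset F I) : aset_sub S S' -> aset_sub (zcl S) (zcl S').
Proof. by move=> SS'; apply: zcl_min => x /SS'; apply: zcl_ext. Qed.

Lemma zcl_idem (S : aset F I) : aset_sub (zcl (zcl S)) (zcl S).
Proof. exact: zcl_min. Qed.

Lemma zcl_image (f : (I -> F) -> (J -> F)) (S : aset F I) :
  polynomial_map f -> aset_sub (aset_image f (zcl S)) (zcl (aset_image f S)).
Proof.
move=> [q fq] _ [x [Sx ->]] p Hp.
pose qs := [tuple q (enum_val j) | j < #|J|].
have pullback z : (p \mPo qs).@[fun i => z (enum_val i)]
                  = p.@[fun j => f z (enum_val j)].
  by rewrite comp_mpoly_meval; apply: meval_eq => j; rewrite tnth_mktuple fq.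
rewrite -pullback; apply: Sx => y Sy; rewrite pullback; apply: Hp.
by exists y.
Qed.

Lemma join_mono (A A' B B' : aset F I) :
  aset_sub A A' -> aset_sub B B' -> aset_sub (join A B) (join A' B').
Proof.
move=> AA' BB'; apply: zcl_mono => _ [x [y [Ax By ->]]].
by exists x, y; split; [apply: AA' | apply: BB' |].
Qed.

End ZariskiClosure.

Section JoinOfClosures.
Variables (F : fieldType) (I : finType).
Implicit Types A B : aset F I.

Lemma translation_polynomial (c : I -> F) :
  polynomial_map (fun x i => x i + c i : F).
Proof.
exists (fun j => 'X_(enum_rank j) + (c j)%:MP) => x j.
by rewrite mevalD mevalXU mevalC enum_rankK.
Qed.

Lemma aset_sumC A B : aset_sub (aset_sum A B) (aset_sum B A).
Proof.
move=> _ [x [y [Ax By ->]]]; exists y, x; split=> //.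
by apply: functional_extensionality => i; rewrite addrC.
Qed.

(* Translating by a fixed point of B is a polynomial map. *)
Lemma aset_sum_zcll A B : aset_sub (aset_sum (zcl A) B) (zcl (aset_sum A B)).
Proof.
move=> _ [x [b [Ax Bb ->]]].
have := zcl_image (translation_polynomial b) (ex_intro _ x (conj Ax erefl)).
by apply: zcl_min => _ [a [Aa ->]]; apply: zcl_ext; exists a, b.
Qed.

Lemma aset_sum_zcl A B :
  aset_sub (aset_sum (zcl A) (zcl B)) (zcl (aset_sum A B)).
Proof.
move=> z /aset_sumC /aset_sum_zcll; apply: zcl_min => w /aset_sumC.
exact: aset_sum_zcll.
Qed.

Lemma join_zcl A B : aset_sub (join (zcl A) (zcl B)) (join A B).
Proof. exact/zcl_min/aset_sum_zcl. Qed.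

End JoinOfClosures.

Section AdditiveImage.
Variables (F : fieldType) (I J : finType) (f : (I -> F) -> (J -> F)).
Hypothesis f_additive :
  forall x y, f (fun i => x i + y i) = fun j => f x j + f y j.
Implicit Types A B : aset F I.

Lemma join_image_sub_zcl A B :
  aset_sub (join (aset_image f A) (aset_image f B))
           (zcl (aset_image f (join A B))).
Proof.
apply: zcl_mono => _ [_ [_ [[x [Ax ->]] [y [By ->]] ->]]].
by exists (fun i => x i + y i); split; [apply: zcl_ext; exists x, y|].
Qed.

Lemma image_join_sub A B : polynomial_map f ->
  aset_sub (aset_image f (join A B)) (join (aset_image f A) (aset_image f B)).
Proof.
move=> fpoly z /(zcl_image fpoly); apply: zcl_mono => _ [_ [[x [y [Ax By ->]]] ->]].
by exists (f x), (f y); split; [exists x | exists y |].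
Qed.

End AdditiveImage.

Section Marginalization.
Variables (F : fieldType) (k n : nat) (K : {set 'I_n}).

Lemma marg_polynomial : polynomial_map (@marg F k n K).
Proof.
exists (fun s : Defs.coord k K => \sum_(t : Defs.coord k [set: 'I_n] |
                 [forall i : leaves K, t (exist _ (sval i) (in_setT (sval i))) == s i])
             'X_(enum_rank t)) => x s.
by rewrite /marg raddf_sum /=; apply: eq_bigr => t _; rewrite mevalXU enum_rankK.
Qed.

Lemma margD (x y : Defs.coord k [set: 'I_n] -> F) :
  marg K (fun i => x i + y i) = fun s => marg K x s + marg K y s.
Proof. by apply: functional_extensionality => s; rewrite /marg big_split. Qed.

End Marginalization.

Theorem lemma1 (F : fieldType) (k n : nat) (M : phylo_model F k n)
  (HM : marg_compatible M)
  (T1 T2 T3 T4 : tree M [set: 'I_n]) (K : {set 'I_n}) :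
  ~ aset_sub (join (var (restrict T1 K)) (var (restrict T2 K)))
             (join (var (restrict T3 K)) (var (restrict T4 K))) ->
  ~ aset_sub (join (var T1) (var T2)) (join (var T3) (var T4)).
Proof.
move=> not_sub_K sub_n; apply: not_sub_K.
have margD_K := @margD F k n K.
move=> z /(join_mono (proj2 (HM T1 K)) (proj2 (HM T2 K))) /join_zcl.
move=> /(join_image_sub_zcl margD_K) /(zcl_mono (aset_image_mono (f := marg K) sub_n)).
move=> /(zcl_mono (image_join_sub margD_K (marg_polynomial F k K))) /zcl_idem.
by apply: join_mono; [apply: (proj1 (HM T3 K)) | apply: (proj1 (HM T4 K))].
Qed.
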